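(* Let $n\ge0$ and let $X_1,\dots,X_n$ be tame $E\mathcal M$-categories. Consider the $E\mathcal M$-category $E\mathrm{Inj}(\mathbf n\times\omega,\omega)\times_{E\mathcal M^n}(X_1\times\dots\times X_n)$ and the natural $E\mathcal M$-functor $$\Phi\colon E\mathrm{Inj}(\mathbf n\times\omega,\omega)\times_{E\mathcal M^n}(X_1\times\cdots\times X_n)\to X_1\times\cdots\times X_n,$$ given on objects by $[f;x_1,\dots,x_n]\mapsto(f(1,-).x_1,\dots,f(n,-).x_n)$ and analogously on morphisms. Then $\Phi$ is an isomorphism onto the full subcategory $X_1\boxtimes\cdots\boxtimes X_n$ of tuples of objects with pairwise disjoint supports.
   Context: $\omega=\{0,1,2,\dots\}$, $\mathcal M$ is the monoid of injective self-maps of $\omega$, and $E\mathcal M$ is the indiscrete category on $\mathcal M$, a monoid in $\mathbf{Cat}$ via composition. For a set $S$, $ES$ is the indiscrete category on $S$. $\mathbf n=\{1,\dots,n\}$. For an injection $f\colon\mathbf n\times\omega\to\omega$, $f(i,-)\in\mathcal M$. $\mathcal M^n$ acts from the right on $\mathrm{Inj}(\mathbf n\times\omega,\omega)$ by $f.(u_1,\dots,u_n)=f\circ(u_1\amalg\cdots\amalg u_n)$, inducing a right $E\mathcal M^n$-action on $E\mathrm{Inj}(\mathbf n\times\omega,\omega)$; $E\mathcal M$ acts on it from the left by postcomposition. The category $E\mathrm{Inj}(\mathbf n\times\omega,\omega)\times_{E\mathcal M^n}(X_1\times\cdots\times X_n)$ is the coequalizer of the right $E\mathcal M^n$-action on the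 first factor and the left action on the second factor. An object $x$ of an $E\mathcal M$-category is supported on a finite set $A\subset\omega$ if $u.x=x$ for every $u\in\mathcal M$ fixing $A$ pointwise; the support $\mathrm{supp}(x)$ is the smallest such set; an $E\mathcal M$-category is tame if every object is supported on some finite set. *)

From mathcomp Require Import all_boot.
From Stdlib Require Import FunctionalExtensionality.

Set Implicit Arguments.
Unset Strict Implicit.
Unset Printing Implicit Defensive.

Record Category := {
  Ob :> Type;
  Hom : Ob -> Ob -> Type;
  idm : forall a, Hom a a;
  comp : forall x y z, Hom y z -> Hom x y -> Hom x z;
  comp_idl : forall a b (f : Hom a b), comp (idm b) f = f;
  comp_idr : forall a b (f : Hom a b), comp f (idm a) = f;
  comp_assoc : forall a b c d (f : Hom a b) (g : Hom b c) (h : Hom c d),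
      comp h (comp g f) = comp (comp h g) f }.
Arguments Hom {_} _ _.
Arguments idm {_} _.
Arguments comp {_ _ _ _} _ _.

Definition hcast (C : Category) (a b a' b' : C) (ea : a = a') (eb : b = b')
  (f : Hom a b) : Hom a' b' :=
  match ea in _ = a0 return Hom a0 b' with
  | erefl => match eb in _ = b0 return Hom a b0 with erefl => f end
  end.

Record Functor (C D : Category) := {
  fobj :> C -> D;
  fhom : forall a b, Hom a b -> Hom (fobj a) (fobj b);
  fhom_id : forall a, fhom (idm a) = idm (fobj a);
  fhom_comp : forall a b c (f : Hom a b) (g : Hom b c),
      fhom (comp g f) = comp (fhom g) (fhom f) }.
Arguments fhom {_ _} _ {_ _} _.

Definition fcomp_obj C D E (G : Functor D E) (F : Functor C D) (a : C) : E :=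
  G (F a).
Lemma fcomp_id C D E (G : Functor D E) (F : Functor C D) (a : C) :
  fhom G (fhom F (idm a)) = idm (G (F a)).
Proof. by rewrite !fhom_id. Qed.
Lemma fcomp_comp C D E (G : Functor D E) (F : Functor C D) (a b c : C)
  (f : Hom a b) (g : Hom b c) :
  fhom G (fhom F (comp g f)) = comp (fhom G (fhom F g)) (fhom G (fhom F f)).
Proof. by rewrite !fhom_comp. Qed.
Definition fcomp C D E (G : Functor D E) (F : Functor C D) : Functor C E :=
  {| fobj := fcomp_obj G F;
     fhom := fun a b f => fhom G (fhom F f);
     fhom_id := fcomp_id G F;
     fhom_comp := fcomp_comp G F |}.

Definition feq C D (F G : Functor C D) : Prop :=
  exists eo : forall x, F x = G x,
    forall x y (f : Hom x y), hcast (eo x) (eo y) (fhom F f) = fhom G f.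

Definition is_coequalizer A B (F G : Functor A B) (Q : Category)
  (q : Functor B Q) : Prop :=
  feq (fcomp q F) (fcomp q G) /\
  forall (D : Category) (h : Functor B D),
    feq (fcomp h F) (fcomp h G) ->
    exists k : Functor Q D,
      feq (fcomp k q) h /\ forall k' : Functor Q D, feq (fcomp k' q) h -> feq k' k.

Lemma unit_eq (f : unit) : tt = f. Proof. by case: f. Qed.
Definition ECat (S : Type) : Category :=
  {| Ob := S; Hom := fun _ _ => unit; idm := fun _ => tt;
     comp := fun _ _ _ _ _ => tt;
     comp_idl := fun _ _ f => unit_eq f;
     comp_idr := fun _ _ f => unit_eq f;
     comp_assoc := fun _ _ _ _ _ _ _ => erefl |}.

Section Prod.
Variables C D : Category.
Definition prod_hom (a b : C * D) := (Hom a.1 b.1 * Hom a.2 b.2)%type.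
Definition prod_id (a : C * D) : prod_hom a a := (idm a.1, idm a.2).
Definition prod_comp (a b c : C * D) (g : prod_hom b c) (f : prod_hom a b)
  : prod_hom a c := (comp g.1 f.1, comp g.2 f.2).
Lemma prod_idl a b (f : prod_hom a b) : prod_comp (prod_id b) f = f.
Proof. by case: f => f1 f2; rewrite /prod_comp /= !comp_idl. Qed.
Lemma prod_idr a b (f : prod_hom a b) : prod_comp f (prod_id a) = f.
Proof. by case: f => f1 f2; rewrite /prod_comp /= !comp_idr. Qed.
Lemma prod_assoc a b c d (f : prod_hom a b) (g : prod_hom b c) (h : prod_hom c d) :
  prod_comp h (prod_comp g f) = prod_comp (prod_comp h g) f.
Proof. by rewrite /prod_comp /= !comp_assoc. Qed.
Definition prodCat : Category :=
  {| Ob := (C * D)%type; Hom := prod_hom; idm := prod_id; comp := prod_comp;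
     comp_idl := prod_idl; comp_idr := prod_idr; comp_assoc := prod_assoc |}.
End Prod.

Section Pi.
Variables (I : Type) (X : I -> Category).
Definition pi_hom (a b : forall i, X i) := forall i, Hom (a i) (b i).
Definition pi_id (a : forall i, X i) : pi_hom a a := fun i => idm (a i).
Definition pi_comp (a b c : forall i, X i) (g : pi_hom b c) (f : pi_hom a b)
  : pi_hom a c := fun i => comp (g i) (f i).
Lemma pi_idl a b (f : pi_hom a b) : pi_comp (pi_id b) f = f.
Proof. apply: functional_extensionality_dep => i; exact: comp_idl. Qed.
Lemma pi_idr a b (f : pi_hom a b) : pi_comp f (pi_id a) = f.
Proof. apply: functional_extensionality_dep => i; exact: comp_idr. Qed.
Lemma pi_assoc a b c d (f : pi_hom a b) (g : pi_hom b c) (h : pi_hom c d) :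
  pi_comp h (pi_comp g f) = pi_comp (pi_comp h g) f.
Proof. apply: functional_extensionality_dep => i; exact: comp_assoc. Qed.
Definition piCat : Category :=
  {| Ob := forall i, X i; Hom := pi_hom; idm := pi_id; comp := pi_comp;
     comp_idl := pi_idl; comp_idr := pi_idr; comp_assoc := pi_assoc |}.
End Pi.

Record Mon := { mfun :> nat -> nat; minj : injective mfun }.
Definition idM : Mon := {| mfun := id; minj := @inj_id nat |}.
Definition mulM (u v : Mon) : Mon :=
  {| mfun := u \o v; minj := inj_comp (@minj u) (@minj v) |}.

(* The action functor EM x X -> X: on objects (u, x) |-> u.x, on morphisms
   ((u -> v), f : x -> y) |-> acth u v f : u.x -> v.y (EM is indiscrete). *)
Record EMCat := {
  emC :> Category;
  act : Mon -> emC -> emC;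
  acth : forall (u v : Mon) (x y : emC), Hom x y -> Hom (act u x) (act v y);
  acth_id : forall u (x : emC), acth u u (idm x) = idm (act u x);
  acth_comp : forall u v w (x y z : emC) (f : Hom x y) (g : Hom y z),
      comp (acth v w g) (acth u v f) = acth u w (comp g f);
  act_unit : forall x, act idM x = x;
  act_assoc : forall u v x, act u (act v x) = act (mulM u v) x;
  acth_unit : forall (x y : emC) (f : Hom x y),
      hcast (act_unit x) (act_unit y) (acth idM idM f) = f;
  acth_assoc : forall u v u' v' (x y : emC) (f : Hom x y),
      hcast (act_assoc u' u x) (act_assoc v' v y) (acth u' v' (acth u v f))
      = acth (mulM u' u) (mulM v' v) f }.

Definition supported (X : EMCat) (x : X) (A : seq nat) : Prop :=
  forall u : Mon, (forall a, a \in A -> u a = a) -> act u x = x.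

(* supp(x): the smallest finite supporting set; defined as the intersection of
   all finite supporting sets (which is the smallest one whenever it exists). *)
Definition supp (X : EMCat) (x : X) (a : nat) : Prop :=
  forall A : seq nat, supported x A -> a \in A.

Definition tame (X : EMCat) : Prop := forall x : X, exists A, supported x A.

Record InjN (n : nat) := { jfun :> 'I_n * nat -> nat; jinj : injective jfun }.

Lemma slice_inj n (f : InjN n) (i : 'I_n) : injective (fun k => f (i, k)).
Proof. by move=> a b /jinj [] . Qed.
Definition slice n (f : InjN n) (i : 'I_n) : Mon :=
  {| mfun := fun k => f (i, k); minj := @slice_inj n f i |}.

Lemma ract_inj n (f : InjN n) (u : 'I_n -> Mon) :
  injective (fun p : 'I_n * nat => f (p.1, u p.1 p.2)).
Proof.
move=> [i a] [j b] /jinj /= [ei]; subst j => /minj ->; by [].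
Qed.
Definition ract n (f : InjN n) (u : 'I_n -> Mon) : InjN n :=
  {| jfun := fun p => f (p.1, u p.1 p.2); jinj := @ract_inj n f u |}.

Section Coeq.
Variables (n : nat) (X : 'I_n -> EMCat).

Definition PX : Category := piCat (fun i => emC (X i)).
Definition EInj : Category := ECat (InjN n).
Definition EMn : Category := ECat ('I_n -> Mon).

Definition Dom : Category := prodCat (prodCat EInj EMn) PX.
Definition Cod : Category := prodCat EInj PX.

Definition Lobj (a : Dom) : Cod := (ract a.1.1 a.1.2, a.2).
Definition Lhom (a b : Dom) (h : Hom a b) : Hom (Lobj a) (Lobj b) := (tt, h.2).
Lemma Lhom_id a : Lhom (idm a) = idm (Lobj a). Proof. by []. Qed.
Lemma Lhom_comp a b c (f : Hom a b) (g : Hom b c) :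
  Lhom (comp g f) = comp (Lhom g) (Lhom f).
Proof. by []. Qed.
Definition Lfun : Functor Dom Cod :=
  {| fobj := Lobj; fhom := Lhom; fhom_id := Lhom_id; fhom_comp := Lhom_comp |}.

Definition Robj (a : Dom) : Cod := (a.1.1, fun i => act (a.1.2 i) (a.2 i)).
Definition Rhom (a b : Dom) (h : Hom a b) : Hom (Robj a) (Robj b) :=
  (tt, fun i => acth (a.1.2 i) (b.1.2 i) (h.2 i)).
Lemma Rhom_id a : Rhom (idm a) = idm (Robj a).
Proof.
rewrite /Rhom; congr pair; apply: functional_extensionality_dep => i.
exact: acth_id.
Qed.
Lemma Rhom_comp a b c (f : Hom a b) (g : Hom b c) :
  Rhom (comp g f) = comp (Rhom g) (Rhom f).
Proof.
rewrite /Rhom; congr pair; apply: functional_extensionality_dep => i.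
by rewrite /= /pi_comp acth_comp.
Qed.
Definition Rfun : Functor Dom Cod :=
  {| fobj := Robj; fhom := Rhom; fhom_id := Rhom_id; fhom_comp := Rhom_comp |}.

Definition Psiobj (a : Cod) : PX := fun i => act (slice a.1 i) (a.2 i).
Definition Psihom (a b : Cod) (h : Hom a b) : Hom (Psiobj a) (Psiobj b) :=
  fun i => acth (slice a.1 i) (slice b.1 i) (h.2 i).
Lemma Psihom_id a : Psihom (idm a) = idm (Psiobj a).
Proof. apply: functional_extensionality_dep => i; exact: acth_id. Qed.
Lemma Psihom_comp a b c (f : Hom a b) (g : Hom b c) :
  Psihom (comp g f) = comp (Psihom g) (Psihom f).
Proof.
apply: functional_extensionality_dep => i.
by rewrite /Psihom /= /pi_comp acth_comp.
Qed.
Definition Psi : Functor Cod PX :=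
  {| fobj := Psiobj; fhom := Psihom; fhom_id := Psihom_id;
     fhom_comp := Psihom_comp |}.

Definition disjoint_supports (x : PX) : Prop :=
  forall i j : 'I_n, i != j -> forall a, supp (x i) a -> supp (x j) a -> False.

End Coeq.

From mathcomp Require Import all_boot zify.
From Stdlib Require Import FunctionalExtensionality ProofIrrelevance.
From Stdlib Require Import PropExtensionality ClassicalEpsilon Classical Relations.

Set Implicit Arguments.
Unset Strict Implicit.
Unset Printing Implicit Defensive.

(* An object [(f; x)] of the coequalizer is sent by Phi to Psi (f; x), the family
   of the [f(i,-).x_i], whose supports [f(i, supp x_i)] are pairwise disjoint because
   [f] is injective; conversely a family [y] with disjoint supports is Psi (g; y) for
   an injection [g] that is the identity on each [supp y_i].  Two objects with the
   same image under Psi are joined by a zigzag of the generating identifications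
   [(f.u; x) ~ (f; u.x)]: precomposing with injections that fix the supports and
   take fresh values, both factor through one common injection [H], over which they
   coincide since acting by an injection is injective on finitely supported objects.
   As each [u.-] is bijective on hom-sets, Psi is fully faithful, so q, which is
   compatible with Psi along such zigzags, factors through the full image of Psi by a
   functor inverse to Phi. *)

(** * Morphisms up to transport, and strict equality of functors *)

Section Heq.
Variable C : Category.

Definition heq (a b a' b' : C) (f : Hom a b) (g : Hom a' b') : Prop :=
  exists (ea : a = a') (eb : b = b'), hcast ea eb f = g.

Lemma hcast_irr (a b a' b' : C) (ea ea' : a = a') (eb eb' : b = b') f :
  hcast ea eb f = hcast ea' eb' f.
Proof. by rewrite (proof_irrelevance _ ea ea') (proof_irrelevance _ eb eb'). Qed.

Lemma hcast_inj (a b a' b' : C) (ea : a = a') (eb : b = b') :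
  injective (@hcast C a b a' b' ea eb).
Proof. by case: a' / ea; case: b' / eb. Qed.

Lemma hcast_idm (a a' : C) (ea ea' : a = a') : hcast ea ea' (idm a) = idm a'.
Proof. by rewrite (proof_irrelevance _ ea' ea); clear ea'; case: a' / ea. Qed.

Lemma hcast_comp (a b c a' b' c' : C) (ea : a = a') (eb : b = b') (ec : c = c')
    (f : Hom a b) (g : Hom b c) :
  hcast ea ec (comp g f) = comp (hcast eb ec g) (hcast ea eb f).
Proof. by case: a' / ea; case: b' / eb; case: c' / ec. Qed.

Lemma heq_refl a b (f : Hom a b) : heq f f.
Proof. by exists erefl, erefl. Qed.

Lemma heq_hcast a b a' b' (ea : a = a') (eb : b = b') (f : Hom a b) :
  heq (hcast ea eb f) f.
Proof. by exists (esym ea), (esym eb); case: a' / ea; case: b' / eb. Qed.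

Lemma heq_sym a b a' b' (f : Hom a b) (g : Hom a' b') : heq f g -> heq g f.
Proof. by case=> ea [eb Eg]; subst g; apply: heq_hcast. Qed.

Lemma heq_trans a b a' b' a'' b'' (f : Hom a b) (g : Hom a' b') (h : Hom a'' b'') :
  heq f g -> heq g h -> heq f h.
Proof.
case=> ea [eb Eg] [ea' [eb' Eh]]; subst g h; exists (etrans ea ea'), (etrans eb eb').
by case: a'' / ea'; case: b'' / eb'; case: a' / ea; case: b' / eb.
Qed.

Lemma heq_eq a b (f g : Hom a b) : heq f g -> f = g.
Proof. by case=> ea [eb <-]; rewrite (hcast_irr ea erefl eb erefl). Qed.

Lemma heq_obj a b a' b' (f : Hom a b) (g : Hom a' b') : heq f g -> a = a' /\ b = b'.
Proof. by case=> ea [eb _]. Qed.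

End Heq.

Lemma heq_fhom (C D : Category) (F : Functor C D) a b a' b' (f : Hom a b)
    (g : Hom a' b') :
  heq f g -> heq (fhom F f) (fhom F g).
Proof. by case=> ea [eb Eg]; subst g; case: a' / ea; case: b' / eb; apply: heq_refl. Qed.

Lemma heq_pi (I : Type) (Y : I -> Category) (a b a' b' : piCat Y)
    (f : Hom a b) (g : Hom a' b') :
  a = a' -> b = b' -> (forall i, heq (f i) (g i)) -> heq f g.
Proof.
move=> ea eb fg; exists ea, eb; case: a' / ea in g fg *; case: b' / eb in g fg *.
by apply: functional_extensionality_dep => i; apply: heq_eq.
Qed.

Section FunctorEq.
Variables C D : Category.
Implicit Types F G K : Functor C D.

Lemma feqP F G :
  (forall x, F x = G x) -> (forall x y (f : Hom x y), heq (fhom F f) (fhom G f)) ->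
  feq F G.
Proof. by move=> eo FG; exists eo => x y f; case: (FG x y f) => ea [eb <-]; apply: hcast_irr. Qed.

Lemma feq_obj F G : feq F G -> forall x, F x = G x.
Proof. by case. Qed.

Lemma feq_hom F G : feq F G -> forall x y (f : Hom x y), heq (fhom F f) (fhom G f).
Proof. by case=> eo FG x y f; exists (eo x), (eo y). Qed.

Lemma feq_refl F : feq F F.
Proof. by apply: feqP => // x y f; apply: heq_refl. Qed.

Lemma feq_sym F G : feq F G -> feq G F.
Proof.
move=> FG; apply: feqP => [x|x y f]; first by rewrite (feq_obj FG).
exact/heq_sym/feq_hom.
Qed.

Lemma feq_trans F G K : feq F G -> feq G K -> feq F K.
Proof.
move=> FG GK; apply: feqP => [x|x y f]; first by rewrite (feq_obj FG) (feq_obj GK).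
exact: heq_trans (feq_hom FG f) (feq_hom GK f).
Qed.

End FunctorEq.

Lemma feq_compl (B C D : Category) (H : Functor C D) (F G : Functor B C) :
  feq F G -> feq (fcomp H F) (fcomp H G).
Proof.
move=> FG; apply: feqP => [x|x y f] /=; first by rewrite /fcomp_obj (feq_obj FG).
exact/heq_fhom/feq_hom.
Qed.

Lemma feq_assoc (A B C D : Category) (F : Functor A B) (G : Functor B C)
    (H : Functor C D) :
  feq (fcomp (fcomp H G) F) (fcomp H (fcomp G F)).
Proof. by apply: feqP => // x y f; apply: heq_refl. Qed.

Definition idF (C : Category) : Functor C C :=
  {| fobj := id; fhom := fun a b f => f;
     fhom_id := fun a => erefl; fhom_comp := fun a b c f g => erefl |}.

Lemma feq_idl (C D : Category) (F : Functor C D) : feq (fcomp (idF D) F) F.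
Proof. by apply: feqP => // x y f; apply: heq_refl. Qed.

Definition full (C D : Category) (F : Functor C D) : Prop :=
  forall a b (g : Hom (F a) (F b)), exists f : Hom a b, fhom F f = g.

Definition faithful (C D : Category) (F : Functor C D) : Prop :=
  forall a b, injective (@fhom _ _ F a b).

Lemma feq_id_inj (C D : Category) (F : Functor C D) (G : Functor D C) :
  feq (fcomp G F) (idF C) -> injective F.
Proof. by move=> /feq_obj GF a b Fab; rewrite -[a]GF -[b]GF /= /fcomp_obj Fab. Qed.

Lemma feq_id_faithful (C D : Category) (F : Functor C D) (G : Functor D C) :
  feq (fcomp G F) (idF C) -> faithful F.
Proof.
move=> /feq_hom GF a b f g Ffg; apply: heq_eq.
by apply: heq_trans (heq_sym (GF _ _ f)) _; rewrite /= Ffg; apply: GF.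
Qed.

(** * Coequalizers, full images and zigzags *)

Definition indiscreteF (C : Category) (P : C -> Prop) : Functor C (ECat Prop) :=
  {| fobj := (P : C -> ECat Prop);
     fhom := fun a b f => (tt : @Hom (ECat Prop) (P a) (P b));
     fhom_id := fun a => erefl; fhom_comp := fun a b c f g => erefl |}.

Section Coequalizer.
Variables (A B Q : Category) (F G : Functor A B) (q : Functor B Q).
Hypothesis coeq : is_coequalizer F G q.

Lemma coeq_epi (D : Category) (k1 k2 : Functor Q D) :
  feq (fcomp k1 q) (fcomp k2 q) -> feq k1 k2.
Proof.
case: coeq => qFG univ k12.
have k1FG : feq (fcomp (fcomp k1 q) F) (fcomp (fcomp k1 q) G).
  apply: feq_trans (feq_assoc _ _ _) _.
  by apply: feq_trans _ (feq_sym (feq_assoc _ _ _)); apply: feq_compl.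
have [k [_ k_uniq]] := univ D _ k1FG.
exact: feq_trans (k_uniq k1 (feq_refl _)) (feq_sym (k_uniq k2 (feq_sym k12))).
Qed.

(* [fun=> True] and [image q], as functors to [ECat Prop], agree after [q], hence are equal. *)
Lemma coeq_surj (a : Q) : exists b, q b = a.
Proof.
pose inIm (a : Q) := exists b, q b = a.
have imT b : True = inIm (q b).
  by apply: propositional_extensionality; split=> // _; exists b.
change (inIm a).
suff /coeq_epi/feq_obj/(_ a) :
    feq (fcomp (indiscreteF (fun=> True)) q) (fcomp (indiscreteF inIm) q).
  by move=> /= <-.
by apply: feqP => [b|b b' _] //=; exists (imT b), (imT b'); case: (hcast _ _ _).
Qed.

End Coequalizer.

Section FullSubcategory.
Variables (D : Category) (P : D -> Prop).

Definition fullsub : Category :=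
  {| Ob := {y : D | P y}; Hom := fun a b => Hom (sval a) (sval b);
     idm := fun a => idm (sval a); comp := fun a b c g f => comp g f;
     comp_idl := fun a b f => comp_idl f; comp_idr := fun a b f => comp_idr f;
     comp_assoc := fun a b c d f g h => comp_assoc f g h |}.

Lemma fullsub_obj_inj (a b : fullsub) : sval a = sval b -> a = b.
Proof. exact: (@eq_sig_hprop D P (fun y => proof_irrelevance (P y)) a b). Qed.

Lemma heq_fullsub (a b a' b' : fullsub) (f : Hom a b) (g : Hom a' b') :
  heq (C := D) f g -> heq f g.
Proof.
move=> fg; have [/fullsub_obj_inj ea /fullsub_obj_inj eb] := heq_obj fg.
by subst a' b'; rewrite (heq_eq fg); apply: heq_refl.
Qed.

Variables (C : Category) (F : Functor C D) (FP : forall c, P (F c)).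

Definition corestr : Functor C fullsub :=
  {| fobj := fun c => exist P (F c) (FP c) : fullsub;
     fhom := fun a b f => fhom F f;
     fhom_id := fun a => fhom_id F a;
     fhom_comp := fun a b c f g => fhom_comp F f g |}.

Lemma corestr_inj : injective corestr -> injective F.
Proof. by move=> inj a b Fab; apply: inj; apply: fullsub_obj_inj. Qed.

End FullSubcategory.

Definition image (C D : Category) (F : Functor C D) (y : D) : Prop :=
  exists c, F c = y.

Definition corestr_image (C D : Category) (F : Functor C D) :
    Functor C (fullsub (image F)) :=
  corestr (fun c => ex_intro _ c erefl).

Section ImageFactorization.
Variables (C D Q : Category) (F : Functor C D) (q : Functor C Q).
Hypothesis F_full : full F.
Hypothesis q_obj : forall c c', F c = F c' -> q c = q c'.
Hypothesis q_hom : forall c d c' d' (m : Hom c d) (m' : Hom c' d'),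
  heq (fhom F m) (fhom F m') -> heq (fhom q m) (fhom q m').

Definition preim (y : fullsub (image F)) : C :=
  proj1_sig (constructive_indefinite_description _ (proj2_sig y)).

Lemma preimK y : F (preim y) = sval y.
Proof. exact: proj2_sig (constructive_indefinite_description _ (proj2_sig y)). Qed.

Definition lift a b (g : Hom (F a) (F b)) : Hom a b :=
  proj1_sig (constructive_indefinite_description _ (F_full g)).

Lemma liftK a b (g : Hom (F a) (F b)) : fhom F (lift g) = g.
Proof. exact: proj2_sig (constructive_indefinite_description _ (F_full g)). Qed.

Lemma q_eq c d (m m' : Hom c d) : fhom F m = fhom F m' -> fhom q m = fhom q m'.
Proof. by move=> Fmm'; apply/heq_eq/q_hom; rewrite Fmm'; apply: heq_refl. Qed.

Definition factor_hom (y z : fullsub (image F)) (g : Hom y z) :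
    Hom (q (preim y)) (q (preim z)) :=
  fhom q (lift (hcast (esym (preimK y)) (esym (preimK z)) g)).

Lemma factor_hom_id y : factor_hom (idm y) = idm (q (preim y)).
Proof. by rewrite /factor_hom -fhom_id; apply: q_eq; rewrite liftK fhom_id hcast_idm. Qed.

Lemma factor_hom_comp x y z (f : Hom x y) (g : Hom y z) :
  factor_hom (comp g f) = comp (factor_hom g) (factor_hom f).
Proof.
rewrite /factor_hom -fhom_comp; apply: q_eq.
by rewrite fhom_comp !liftK /= (hcast_comp _ (esym (preimK y))).
Qed.

Definition factor : Functor (fullsub (image F)) Q :=
  {| fobj := fun y => q (preim y); fhom := factor_hom;
     fhom_id := factor_hom_id; fhom_comp := factor_hom_comp |}.

Lemma factor_corestr : feq (fcomp factor (corestr_image F)) q.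
Proof.
apply: feqP => [c|c d m]; first exact/q_obj/preimK.
by apply: q_hom; rewrite liftK; apply: heq_hcast.
Qed.

End ImageFactorization.

Section Zigzags.
Variables (A B D Q : Category) (L R : Functor A B) (F : Functor B D) (q : Functor B Q).
Hypotheses (L_full : full L) (F_faithful : faithful F) (F_full : full F).
Hypotheses (FLR : feq (fcomp F L) (fcomp F R)) (qLR : feq (fcomp q L) (fcomp q R)).

Definition linked (b b' : B) : Prop := exists e, b = L e /\ b' = R e.

Hypothesis linked_refl : forall b, linked b b.

Definition zigzag : B -> B -> Prop := clos_refl_sym_trans B linked.

(* The invariant carried along zigzags that lets [q] factor through the image of [F]. *)
Definition identified (c d c' d' : B) : Prop :=
  [/\ q c = q c', q d = q d', F c = F c', F d = F d' &
      forall (m : Hom c d) (m' : Hom c' d'),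
        heq (fhom F m) (fhom F m') -> heq (fhom q m) (fhom q m')].

Lemma identified_refl c d : identified c d c d.
Proof. by split=> // m m' /heq_eq /F_faithful ->; apply: heq_refl. Qed.

Lemma identified_sym c d c' d' : identified c d c' d' -> identified c' d' c d.
Proof. by case=> qc qd Fc Fd qm; split=> // m m' /heq_sym /qm /heq_sym. Qed.

Lemma identified_trans c d c' d' c'' d'' :
  identified c d c' d' -> identified c' d' c'' d'' -> identified c d c'' d''.
Proof.
case=> qc qd Fc Fd qm [qc' qd' Fc' Fd' qm'].
split; [exact: etrans qc qc' | exact: etrans qd qd' | exact: etrans Fc Fc' |
        exact: etrans Fd Fd' | move=> m m'' Fmm''].
have [m' Fm'] := F_full (hcast Fc Fd (fhom F m)).
have Fmm' : heq (fhom F m) (fhom F m') by rewrite Fm'; apply/heq_sym/heq_hcast.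
exact: heq_trans (qm _ _ Fmm') (qm' _ _ (heq_trans (heq_sym Fmm') Fmm'')).
Qed.

Lemma identified_step e1 e2 : identified (L e1) (L e2) (R e1) (R e2).
Proof.
split; [exact: (feq_obj qLR) | exact: (feq_obj qLR) | exact: (feq_obj FLR) |
        exact: (feq_obj FLR) | move=> m m' Fmm']; have [h Lh] := L_full m; subst m.
have -> : m' = fhom R h.
  apply/F_faithful/heq_eq; apply: heq_trans (heq_sym Fmm') _; exact: (feq_hom FLR h).
exact: (feq_hom qLR h).
Qed.

Lemma identified_linked c c' d d' :
  linked c c' -> linked d d' -> identified c d c' d'.
Proof. by case=> e1 [-> ->] [e2 [-> ->]]; apply: identified_step. Qed.

Lemma identified_zigzagl c c' d : zigzag c c' -> identified c d c' d.
Proof.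
elim=> [x y xy | x | x y _ | x y z _ xy _ yz].
- exact/identified_linked/linked_refl.
- exact: identified_refl.
- exact: identified_sym.
- exact: identified_trans xy yz.
Qed.

Lemma identified_zigzagr c d d' : zigzag d d' -> identified c d c d'.
Proof.
elim=> [x y xy | x | x y _ | x y z _ xy _ yz].
- exact/identified_linked/xy/linked_refl.
- exact: identified_refl.
- exact: identified_sym.
- exact: identified_trans xy yz.
Qed.

Lemma identified_zigzag c d c' d' :
  zigzag c c' -> zigzag d d' -> identified c d c' d'.
Proof.
move=> cc' dd'.
exact: identified_trans (identified_zigzagl d cc') (identified_zigzagr c' dd').
Qed.

End Zigzags.

(** * Injections of omega *)

Lemma monE (u v : Mon) : u =1 v -> u = v.
Proof.
case: u v => [f f_inj] [g g_inj] /= /functional_extensionality fg; subst g.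
by rewrite (proof_irrelevance _ f_inj g_inj).
Qed.

Lemma InjNE n (f g : InjN n) : f =1 g -> f = g.
Proof.
case: f g => [f f_inj] [g g_inj] /= /functional_extensionality fg; subst g.
by rewrite (proof_irrelevance _ f_inj g_inj).
Qed.

Lemma slice_ract n (f : InjN n) (u : 'I_n -> Mon) i :
  slice (ract f u) i = mulM (slice f i) (u i).
Proof. exact: monE. Qed.

Lemma ubound_seq (s : seq nat) : exists N, forall k, k \in s -> k < N.
Proof.
by exists (\max_(k <- s) k).+1 => k ks; rewrite ltnS; apply: (leq_bigmax_seq (F := id)).
Qed.

Lemma ubound_family (I : finType) (B : I -> seq nat) :
  exists N, forall i k, k \in B i -> k < N.
Proof.
have [N ltN] := ubound_seq (flatten [seq B i | i <- enum I]).
by exists N => i k kB; apply/ltN/flattenP; exists (B i); rewrite ?map_f ?mem_enum.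
Qed.

Lemma inj_if (T U : Type) (P : pred T) (g h : T -> U) :
  {in P &, injective g} -> {in predC P &, injective h} ->
  (forall x y, P x -> ~~ P y -> g x <> h y) ->
  injective (fun x => if P x then g x else h x).
Proof.
move=> g_inj h_inj gh x y; case: ifP => Px; case: ifP => Py.
- exact: g_inj.
- by move/gh; rewrite Py => /(_ Px isT).
- by move/esym/gh; rewrite Px => /(_ Py isT).
- by apply: h_inj; rewrite inE /= ?Px ?Py.
Qed.

Lemma ext_inj (D : seq nat) (g : nat -> nat) :
  {in D &, injective g} -> exists rho : Mon, {in D, rho =1 g}.
Proof.
move=> g_inj; have [N ltN] := ubound_seq (map g D).
have rho_inj : injective (fun k => if k \in D then g k else N + k).
  apply: inj_if => // [k k' _ _ /addnI // | k k' kD _ gkk'].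
  by have := ltN _ (map_f g kD); rewrite gkk'; lia.
by exists (Build_Mon rho_inj) => k /= ->.
Qed.

Definition swapn (a b k : nat) : nat := if k == a then b else if k == b then a else k.

Lemma swapnK a b : involutive (swapn a b).
Proof.
move=> k; rewrite /swapn; case: (eqVneq k a) => [->|ka]; first by rewrite eqxx; case: eqVneq.
by case: (eqVneq k b) => [->|kb]; rewrite ?eqxx // (negPf ka) (negPf kb).
Qed.

Lemma ext_bij (A : seq nat) (u : Mon) :
  exists pi pi' : Mon, [/\ cancel pi pi', cancel pi' pi & {in A, pi =1 u}].
Proof.
elim: A => [|a A [r [r' [rK r'K rA]]]]; first by exists idM, idM.
have [aA | aA] := boolP (a \in A).
  by exists r, r'; split=> // b; rewrite inE => /predU1P [->|]; apply: rA.
pose s := swapn (u a) (r a).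
have sK : cancel (s \o r) (r' \o s) by move=> k /=; rewrite /s swapnK rK.
have sK' : cancel (r' \o s) (s \o r) by move=> k /=; rewrite r'K /s swapnK.
exists (Build_Mon (can_inj sK)), (Build_Mon (can_inj sK')); split=> // b.
rewrite inE /= /s /swapn => /predU1P [->|bA]; first by rewrite eqxx; case: eqVneq.
have ub : u b != u a by apply: contraNneq aA => /minj <-.
have rb : r b != r a by apply: contraNneq aA => /minj <-.
by rewrite (rA _ bA) (negPf ub) -(rA _ bA) (negPf rb).
Qed.

Lemma inj_unbounded (g : nat -> nat) : injective g -> forall N, exists m, N <= g m.
Proof.
move=> g_inj N; suff /hasP [m _ ?] : has (fun m => N <= g m) (iota 0 N.+1) by exists m.
apply: contraT => /hasPn small.
have : size (map g (iota 0 N.+1)) <= size (iota 0 N).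
  apply: uniq_leq_size; first by rewrite map_inj_uniq ?iota_uniq.
  by move=> _ /mapP [m /small /= lt ->]; rewrite mem_iota; lia.
by rewrite size_map !size_iota ltnn.
Qed.

Lemma increasing_choice (g : nat -> nat -> nat) (N : nat) :
  (forall k, injective (g k)) ->
  exists idx : nat -> nat,
    forall k, N + k <= g k (idx k) /\ g k (idx k) < g k.+1 (idx k.+1).
Proof.
move=> g_inj; pose pick k b := xchoose (inj_unbounded (g_inj k) b).
have pickP k b : b <= g k (pick k b) := xchooseP (inj_unbounded (g_inj k) b).
pose fix idx k := if k is k'.+1 then pick k (g k' (idx k')).+1 else pick 0 N.
have idx_incr k : g k (idx k) < g k.+1 (idx k.+1) by apply: pickP.
exists idx => k; split=> //; elim: k => [|k IH]; first by rewrite addn0 pickP.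
by rewrite addnS; apply: leq_ltn_trans IH (idx_incr k).
Qed.

Lemma fresh_choice (I : countType) (g : I -> nat -> nat) (N : nat) :
  (forall x, injective (g x)) ->
  exists idx : I -> nat, injective (fun x => g x (idx x)) /\ forall x, N <= g x (idx x).
Proof.
move=> g_inj; pose gn k := if unpickle k is Some x then g x else id.
have gn_inj k : injective (gn k) by rewrite /gn; case: (unpickle k).
have [idx idxP] := increasing_choice N gn_inj.
pose v k := gn k (idx k); have v_mono : {homo v : k l / k < l}.
  by apply: homo_ltn => [? ? ? /ltn_trans|k]; [apply | case: (idxP k)].
have gnE x : gn (pickle x) = g x by rewrite /gn pickleK.
exists (fun x => idx (pickle x)); split=> [x y | x]; last first.
  by case: (idxP (pickle x)); rewrite gnE; lia.
rewrite -!gnE -/(v _) -/(v _) => vxy; apply: (pcan_inj pickleK).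
by case: (ltngtP (pickle x) (pickle y)) => // /v_mono; rewrite vxy ltnn.
Qed.

Section Glue.
Variables (n M : nat) (B : 'I_n -> seq nat) (a : 'I_n * nat -> nat).
Hypothesis B_disj : forall i j k, k \in B i -> k \in B j -> i = j.
Hypothesis B_lt : forall i k, k \in B i -> k < M.
Hypotheses (a_inj : injective a) (a_ge : forall p, M <= a p).

Definition glue (p : 'I_n * nat) : nat := if p.2 \in B p.1 then p.2 else a p.

Lemma glue_inj : injective glue.
Proof.
apply: inj_if => [[i k] [j l] kB lB /= kl | p p' _ _ /a_inj // | [i k] p' kB _ /= ka].
  by subst l; congr pair; apply: B_disj kB lB.
by have /= := B_lt kB; have := a_ge p'; lia.
Qed.

Definition glueInj : InjN n := Build_InjN glue_inj.

Lemma ract_glue (f : InjN n) (A : 'I_n -> seq nat) (e : nat -> nat)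
    (idx : 'I_n -> nat -> nat) :
  (forall i k, k \in A i -> f (i, k) \in B i) -> injective e ->
  (forall k, M <= e k) -> (forall i k, f (i, idx i (e k)) = a (i, e k)) ->
  exists U V : 'I_n -> Mon, (forall i, {in A i, V i =1 id}) /\ ract f V = ract glueInj U.
Proof.
move=> fAB e_inj e_ge idxP.
have fA_lt i k : k \in A i -> f (i, k) < M by move/fAB/B_lt.
have U_inj i : injective (fun k => if k \in A i then f (i, k) else e k).
  apply: inj_if => [k l _ _ /jinj [] // | k l _ _ /e_inj // | k l kA _ fe].
  by have := fA_lt _ _ kA; have := e_ge l; lia.
have V_inj i : injective (fun k => if k \in A i then k else idx i (e k)).
  apply: inj_if => // [k l _ _ /(congr1 (fun m => f (i, m))) | k l kA _ kl].
    by rewrite !idxP => /a_inj [] /e_inj.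
  by have := fA_lt _ _ kA; rewrite kl idxP; have := a_ge (i, e l); lia.
exists (fun i => Build_Mon (U_inj i)), (fun i => Build_Mon (V_inj i)).
split=> [i k /= -> //|]; apply: InjNE => [[i k]] /=; rewrite /glue /=.
case: ifP => kA; first by rewrite fAB.
by case: ifP => [/B_lt|_]; [have := e_ge k; lia | rewrite idxP].
Qed.

End Glue.

(** * Supports *)

Section Supports.
Variable X : EMCat.
Implicit Types (x : X) (A B : seq nat) (u v : Mon).

Lemma act_mul u v x : act (mulM u v) x = act u (act v x).
Proof. by rewrite act_assoc. Qed.

Lemma act_can u v x : cancel u v -> act v (act u x) = x.
Proof.
move=> uK; have vu : mulM v u = idM by apply: monE => k /=; rewrite uK.
by rewrite -act_mul vu act_unit.
Qed.

Lemma supported_sub x A B : supported x A -> {subset A <= B} -> supported x B.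
Proof. by move=> sA AB u uB; apply: sA => a /AB /uB. Qed.

Lemma agree_act x A u v : supported x A -> {in A, u =1 v} -> act u x = act v x.
Proof.
move=> sA; have [pi [pi' [piK pi'K piA]]] := ext_bij A u.
suff act_pi (w : Mon) : {in A, w =1 pi} -> act w x = act pi x.
  by move=> uv; rewrite !act_pi // => a aA; rewrite piA // uv.
move=> wA; have -> : w = mulM pi (mulM pi' w) by apply: monE => k /=; rewrite pi'K.
by rewrite act_mul (sA (mulM pi' w)) // => a aA /=; rewrite wA ?piK.
Qed.

Lemma supported_act x A u : supported x A -> supported (act u x) (map u A).
Proof.
move=> sA t tA; rewrite -act_mul; apply: (agree_act sA) => a aA /=.
exact/tA/map_f.
Qed.

Lemma act_inj_supported x1 x2 A1 A2 u :
  supported x1 A1 -> supported x2 A2 -> act u x1 = act u x2 -> x1 = x2.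
Proof.
move=> s1 s2; have [pi [pi' [piK _ piA]]] := ext_bij (A1 ++ A2) u.
rewrite (agree_act s1 (v := pi)) => [|a aA]; last by rewrite piA // mem_cat aA.
rewrite (agree_act s2 (v := pi)) => [|a aA]; last by rewrite piA // mem_cat aA orbT.
by move/(congr1 (act pi')); rewrite !act_can.
Qed.

(* To fix [x] it suffices to agree with [s] on [A] and with the identity on a
   copy of [B] shifted past [A] and [s A]; the shift [T] itself fixes [x]. *)
Lemma supported_inter x A B :
  supported x A -> supported x B -> supported x [seq a <- A | a \in B].
Proof.
move=> sA sB s sAB; have [N ltN] := ubound_seq (A ++ map s A).
have T_inj : injective (fun k => if k \in A then k else N + k).
  apply: inj_if => // [k l _ _ /addnI // | k l kA _ kl].
  by have := ltN k; rewrite mem_cat kA => /(_ isT); lia.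
pose T := Build_Mon T_inj.
have [rho rhoP] : exists rho : Mon, {in A ++ map (addn N) B,
    rho =1 fun k => if k \in A then s k else k}.
  apply: ext_inj => k l; rewrite !mem_cat.
  have [kA|kA] := boolP (k \in A); have [lA|lA] := boolP (l \in A) => //=.
  - by move=> _ _; apply: minj.
  - move=> _ /mapP [b _ ->] skl; have := ltN (s k); rewrite mem_cat map_f //.
    by rewrite orbT skl => /(_ isT); lia.
  - move=> /mapP [b _ ->] _ skl; have := ltN (s l); rewrite mem_cat map_f //.
    by rewrite orbT -skl => /(_ isT); lia.
have Tx : act T x = x by rewrite -[RHS]act_unit; apply: (agree_act sA) => a /= ->.
have rho_s : act rho x = act s x.
  by apply: (agree_act sA) => a aA; rewrite rhoP ?mem_cat ?aA.
rewrite -rho_s -{1}Tx -act_mul -{2}Tx; apply: (agree_act sB) => b bB /=.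
have [bA|bA] := boolP (b \in A).
  by rewrite rhoP ?mem_cat ?bA // sAB // mem_filter bA bB.
have NbA : N + b \notin A.
  by apply/negP => NbA; have := ltN (N + b); rewrite mem_cat NbA => /(_ isT); lia.
by rewrite rhoP ?mem_cat ?map_f ?orbT // (negPf NbA).
Qed.

(* Replace [u] by a bijection [pi] agreeing with it on [A], and pull the support
   of [act pi x] back along the inverse of [pi]. *)
Lemma supported_pre x A B u : supported x A -> supported (act u x) B ->
  supported x [seq a <- A | u a \in B].
Proof.
move=> sA sB; have [pi [pi' [piK _ piA]]] := ext_bij A u.
have ux : act u x = act pi x by apply: (agree_act sA) => a /piA.
rewrite ux in sB.
have := supported_act (u := pi') (supported_inter (supported_act (u := pi) sA) sB).
rewrite act_can // => /supported_sub; apply=> c /mapP [b].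
rewrite mem_filter => /andP [bB /mapP [a aA Eb]] Ec; subst b c.
by rewrite piK mem_filter -piA // bB.
Qed.

(* Shrink [A] by a support missing one of its points outside [supp x]. *)
Lemma supp_seq x A : supported x A ->
  exists2 S, supported x S & forall a, a \in S <-> supp x a.
Proof.
have [k] := ubnP (size A); elim: k A => // k IH A; rewrite ltnS => szA sA.
case: (classic (forall a, a \in A -> supp x a)) => [allA | /not_all_ex_not [a]].
  by exists A => // a; split=> [/allA | /(_ A sA)].
move=> aAsupp; have [aA /not_all_ex_not [C sCaC]] := imply_to_and _ _ aAsupp.
have [sC /negP aC] := imply_to_and _ _ sCaC.
apply: IH (supported_inter sA sC); rewrite size_filter.
set inC := (P in count P A); have : has (predC inC) A by apply/hasP; exists a.
move: szA; rewrite has_count -(count_predC inC A) => + pos; apply: leq_trans.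
by rewrite -addn1 leq_add2l.
Qed.

End Supports.

(** * The comparison functor Psi *)

Section ActionOnMorphisms.
Variable Y : EMCat.

Lemma heq_acth_unit (x y : Y) (f : Hom x y) : heq (acth idM idM f) f.
Proof. by exists (act_unit x), (act_unit y); apply: acth_unit. Qed.

Lemma heq_acth_assoc (u v u' v' : Mon) (x y : Y) (f : Hom x y) :
  heq (acth u' v' (acth u v f)) (acth (mulM u' u) (mulM v' v) f).
Proof. by exists (act_assoc u' u x), (act_assoc v' v y); apply: acth_assoc. Qed.

Lemma heq_acth_congr (u u' v v' : Mon) (x y : Y) (f : Hom x y) :
  u = u' -> v = v' -> heq (acth u v f) (acth u' v' f).
Proof. by move=> -> ->; apply: heq_refl. Qed.

(* The outer factors are invertible, with inverses [acth idM u 1] and [acth v idM 1]. *)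
Lemma acth_factor (u v : Mon) (x y : Y) (f : Hom x y) :
  acth u v f = comp (acth idM v (idm y)) (comp (acth idM idM f) (acth u idM (idm x))).
Proof. by rewrite acth_comp comp_idr acth_comp comp_idl. Qed.

Lemma acth_inj (u v : Mon) (x y : Y) : injective (@acth Y u v x y).
Proof.
move=> f g fg; have unfactor (h : Hom x y) :
    comp (acth v idM (idm y)) (comp (acth u v h) (acth idM u (idm x))) = acth idM idM h.
  by rewrite acth_comp comp_idr acth_comp comp_idl.
have := unfactor f; rewrite fg unfactor => fg'.
apply: heq_eq; apply: heq_trans (heq_sym (heq_acth_unit f)) _.
by rewrite -fg'; apply: heq_acth_unit.
Qed.

Lemma acth_surj (u v : Mon) (x y : Y) (g : Hom (act u x) (act v y)) :
  exists f : Hom x y, acth u v f = g.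
Proof.
set k := comp (acth v idM (idm y)) (comp g (acth idM u (idm x))).
exists (hcast (act_unit x) (act_unit y) k).
have kE : acth idM idM (hcast (act_unit x) (act_unit y) k) = k.
  by apply: (hcast_inj (ea := act_unit x) (eb := act_unit y)); apply: acth_unit.
have inv_x : comp (acth idM u (idm x)) (acth u idM (idm x)) = idm (act u x).
  by rewrite acth_comp comp_idl acth_id.
have inv_y : comp (acth idM v (idm y)) (acth v idM (idm y)) = idm (act v y).
  by rewrite acth_comp comp_idl acth_id.
by rewrite acth_factor kE /k -!comp_assoc inv_x comp_idr !comp_assoc inv_y comp_idl.
Qed.

End ActionOnMorphisms.

Section Psi.
Variables (n : nat) (X : 'I_n -> EMCat).

Lemma Psi_faithful : faithful (Psi X).
Proof.
move=> c d [[] m] [[] m'] /= mm'; congr pair.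
apply: functional_extensionality_dep => i; apply: acth_inj.
exact: (congr1 (fun F : pi_hom _ _ => F i) mm').
Qed.

Lemma Psi_full : full (Psi X).
Proof.
move=> c d g; have /fin_all_exists [m mg] : forall i, exists m : Hom (c.2 i) (d.2 i),
    acth (slice c.1 i) (slice d.1 i) m = g i by move=> i; apply: acth_surj.
by exists (tt, m); apply: functional_extensionality_dep.
Qed.

Lemma Lfun_full : full (Lfun X).
Proof. by move=> e1 e2 [[] m]; exists ((tt, tt), m). Qed.

Lemma linked_refl_LR (c : Cod X) : linked (Lfun X) (Rfun X) c c.
Proof.
case: c => f x; exists ((f, fun=> idM), x); split; rewrite /= /Lobj /Robj /=; congr pair.
- by apply: InjNE => [[i k]].
- by apply: functional_extensionality_dep => i; rewrite act_unit.
Qed.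

Lemma Psi_coequalizes : feq (fcomp (Psi X) (Lfun X)) (fcomp (Psi X) (Rfun X)).
Proof.
have PsiLR e : Psi X (Lfun X e) = Psi X (Rfun X e).
  by apply: functional_extensionality_dep => i /=; rewrite /Psiobj /= slice_ract act_mul.
apply: feqP => [e | e1 e2 h]; first exact: PsiLR.
apply: heq_pi => [||i]; [exact: PsiLR | exact: PsiLR | rewrite /= /Psihom /=].
apply: heq_trans (heq_acth_congr _ (slice_ract _ _ i) (slice_ract _ _ i)) _.
exact/heq_sym/heq_acth_assoc.
Qed.

Hypothesis tameX : forall i, tame (X i).

Lemma support_family (y : PX X) :
  exists B : 'I_n -> seq nat,
    forall i, supported (y i) (B i) /\ forall a, a \in B i <-> supp (y i) a.
Proof.
suff /fin_all_exists : forall i, exists B,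
    supported (y i) B /\ forall a, a \in B <-> supp (y i) a by [].
by move=> i; have [A /supp_seq [B sB BP]] := tameX (y i); exists B.
Qed.

Lemma Psi_disjoint (c : Cod X) : disjoint_supports (Psi X c).
Proof.
case: c => f x i j ij a ai aj.
have [Ai sAi] := tameX (x i); have [Aj sAj] := tameX (x j).
have /mapP [k _ fik] := ai _ (supported_act (u := slice f i) sAi).
have /mapP [l _ fjl] := aj _ (supported_act (u := slice f j) sAj).
by move: fik; rewrite fjl => /jinj [eij _]; rewrite eij eqxx in ij.
Qed.

Lemma disjoint_support_family (y : PX X) (B : 'I_n -> seq nat) :
  disjoint_supports y -> (forall i a, a \in B i <-> supp (y i) a) ->
  forall i j a, a \in B i -> a \in B j -> i = j.
Proof.
move=> dy BP i j a /BP ai /BP aj; apply/eqP; apply: contraT => ij.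
by case: (dy i j ij a).
Qed.

Lemma Psi_image (y : PX X) : image (Psi X) y <-> disjoint_supports y.
Proof.
split=> [[c <-] | dy]; first exact: Psi_disjoint.
have [B BP] := support_family y.
have B_disj := disjoint_support_family dy (fun i => (BP i).2).
have [M B_lt] := ubound_family B.
have a_inj : injective (fun p : 'I_n * nat => M + pickle p).
  by move=> p p' /addnI /(pcan_inj pickleK).
exists (glueInj B_disj B_lt a_inj (fun p => leq_addr _ _), y).
apply: functional_extensionality_dep => i /=; rewrite /Psiobj -[RHS]act_unit.
by apply: (agree_act (BP i).1) => k kB /=; rewrite /glue /= kB.
Qed.

Lemma Psi_injr (H : InjN n) (w w' : PX X) :
  Psi X (H, w) = Psi X (H, w') -> w = w'.
Proof.
move=> Hww'; apply: functional_extensionality_dep => i.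
have [A sA] := tameX (w i); have [A' sA'] := tameX (w' i).
exact: act_inj_supported sA sA' (congr1 (fun y : PX X => y i) Hww').
Qed.

Notation zigzag := (zigzag (Lfun X) (Rfun X)).

Lemma zigzag_ract (f H : InjN n) (U V : 'I_n -> Mon) (x : PX X) :
  (forall i, act (V i) (x i) = x i) -> ract f V = ract H U ->
  zigzag ((f, x) : Cod X) (H, fun i => act (U i) (x i)).
Proof.
move=> Vx fVHU; apply: (rst_trans _ _ _ ((ract f V, x) : Cod X)).
  apply/rst_sym/rst_step; exists ((f, V), x); split=> //=.
  by rewrite /Robj /=; congr pair; apply: functional_extensionality_dep.
by apply: rst_step; exists ((H, U), x); rewrite /= /Lobj /= fVHU.
Qed.

Lemma preimage_support (c : Cod X) (B : 'I_n -> seq nat) :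
  (forall i, supported (Psi X c i) (B i)) ->
  exists A : 'I_n -> seq nat,
    forall i, supported (c.2 i) (A i) /\ forall k, k \in A i -> c.1 (i, k) \in B i.
Proof.
move=> sB; suff /fin_all_exists : forall i, exists A,
    supported (c.2 i) A /\ forall k, k \in A -> c.1 (i, k) \in B i by [].
move=> i; have [A sA] := tameX (c.2 i).
exists [seq k <- A | slice c.1 i k \in B i]; split; first exact: supported_pre sA (sB i).
by move=> k; rewrite mem_filter => /andP [].
Qed.

Section ZigzagToGlue.
Variables (M : nat) (B : 'I_n -> seq nat) (a : 'I_n * nat -> nat).
Hypothesis B_disj : forall i j k, k \in B i -> k \in B j -> i = j.
Hypothesis B_lt : forall i k, k \in B i -> k < M.
Hypotheses (a_inj : injective a) (a_ge : forall p, M <= a p).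

Lemma zigzag_glue (c : Cod X) (A : 'I_n -> seq nat) (e : nat -> nat)
    (idx : 'I_n -> nat -> nat) :
  (forall i, supported (c.2 i) (A i)) -> (forall i k, k \in A i -> c.1 (i, k) \in B i) ->
  injective e -> (forall k, M <= e k) -> (forall i k, c.1 (i, idx i (e k)) = a (i, e k)) ->
  exists w, zigzag c (glueInj B_disj B_lt a_inj a_ge, w) /\
            Psi X (glueInj B_disj B_lt a_inj a_ge, w) = Psi X c.
Proof.
case: c => f x /= sA fAB e_inj e_ge idxP.
have [U [V [VA fVHU]]] := ract_glue B_disj B_lt a_inj a_ge fAB e_inj e_ge idxP.
have Vx i : act (V i) (x i) = x i.
  by rewrite -[RHS]act_unit; apply: (agree_act (sA i)) => k /VA.
exists (fun i => act (U i) (x i)); split; first exact: zigzag_ract.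
apply: functional_extensionality_dep => i; rewrite /= /Psiobj /= -act_mul -slice_ract.
by rewrite -fVHU slice_ract act_mul Vx.
Qed.

End ZigzagToGlue.

(* Both objects are linked to objects over one common injection, built from
   fresh values taken alternately in the ranges of [c.1] and [c'.1]. *)
Lemma Psi_fibre_zigzag (c c' : Cod X) : Psi X c = Psi X c' -> zigzag c c'.
Proof.
move=> cc'; have [B BP] := support_family (Psi X c).
have B_disj := disjoint_support_family (Psi_disjoint (c := c)) (fun i => (BP i).2).
have [M B_lt] := ubound_family B.
have [A AP] := preimage_support (fun i => (BP i).1).
have [A' A'P] : exists A' : 'I_n -> seq nat,
    forall i, supported (c'.2 i) (A' i) /\ forall k, k \in A' i -> c'.1 (i, k) \in B i.
  by apply: preimage_support => i; rewrite -cc'; apply: (BP i).1.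
pose g (p : 'I_n * nat) := if odd p.2 then slice c'.1 p.1 else slice c.1 p.1.
have [idx [a_inj a_ge]] := fresh_choice M (fun p => @minj (g p)).
pose e b k := (M + k).*2 + b.
have e_inj b : injective (e b) by move=> k l /addIn /double_inj /addnI.
have e_ge b k : M <= e b k by rewrite /e; lia.
have idx_even i k : c.1 (i, idx (i, e 0 k)) = g (i, e 0 k) (idx (i, e 0 k)).
  by rewrite /g /e /= addn0 odd_double.
have idx_odd i k : c'.1 (i, idx (i, e 1 k)) = g (i, e 1 k) (idx (i, e 1 k)).
  by rewrite /g /e /= addn1 /= odd_double.
have [w [cw Pw]] := zigzag_glue B_disj B_lt a_inj a_ge (fun i => (AP i).1)
  (fun i => (AP i).2) (e_inj 0) (e_ge 0) (idx := fun i m => idx (i, m)) idx_even.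
have [w' [cw' Pw']] := zigzag_glue B_disj B_lt a_inj a_ge (fun i => (A'P i).1)
  (fun i => (A'P i).2) (e_inj 1) (e_ge 1) (idx := fun i m => idx (i, m)) idx_odd.
have ww' : w = w' by apply: (Psi_injr (H := glueInj B_disj B_lt a_inj a_ge)); rewrite Pw Pw'.
by subst w'; apply: rst_trans _ _ _ _ _ cw (rst_sym _ _ _ _ cw').
Qed.

End Psi.

Lemma inj_surj_bij (A B : Type) (f : A -> B) :
  injective f -> (forall y, exists x, f x = y) -> bijective f.
Proof.
move=> f_inj f_surj.
pose g y := proj1_sig (constructive_indefinite_description _ (f_surj y)).
have gK : cancel g f.
  by move=> y; apply: proj2_sig (constructive_indefinite_description _ (f_surj y)).
by exists g => // x; apply: f_inj; rewrite gK.
Qed.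

Section Main.
Variables (n : nat) (X : 'I_n -> EMCat).
Hypothesis tameX : forall i, tame (X i).
Variables (Q : Category) (q : Functor (Cod X) Q).
Hypothesis coeq : is_coequalizer (Lfun X) (Rfun X) q.
Variable Phi : Functor Q (PX X).
Hypothesis hPhi : feq (fcomp Phi q) (Psi X).

Lemma q_identified c d c' d' : Psi X c = Psi X c' -> Psi X d = Psi X d' ->
  identified (Psi X) q c d c' d'.
Proof.
move=> cc' dd'; apply: (identified_zigzag (Lfun_full (X := X)) (Psi_faithful (X := X))
  (Psi_full (X := X)) (Psi_coequalizes X) (proj1 coeq) (linked_refl_LR (X := X))).
- exact: Psi_fibre_zigzag.
- exact: Psi_fibre_zigzag.
Qed.

Lemma q_obj c c' : Psi X c = Psi X c' -> q c = q c'.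
Proof. by move=> cc'; case: (q_identified cc' cc'). Qed.

Lemma q_hom c d c' d' (m : Hom c d) (m' : Hom c' d') :
  heq (fhom (Psi X) m) (fhom (Psi X) m') -> heq (fhom q m) (fhom q m').
Proof.
move=> mm'; have [cc' dd'] := heq_obj mm'.
by case: (q_identified cc' dd') => _ _ _ _; apply.
Qed.

Lemma Phi_in_image a : image (Psi X) (Phi a).
Proof. by have [c <-] := coeq_surj coeq a; exists c; apply: esym (feq_obj hPhi c). Qed.

Let Phi' := corestr Phi_in_image.
Let factorPsi := factor (Psi_full (X := X)) q_hom.

Lemma Phi_left_inverse : feq (fcomp factorPsi Phi') (idF Q).
Proof.
apply: (coeq_epi coeq); apply: feq_trans (feq_assoc _ _ _) _.
have Phi'q : feq (fcomp Phi' q) (corestr_image (Psi X)).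
  apply: feqP => [c | c d m]; first exact/fullsub_obj_inj/(feq_obj hPhi).
  exact/heq_fullsub/(feq_hom hPhi).
apply: feq_trans (feq_compl _ Phi'q) _.
apply: feq_trans (factor_corestr (Psi_full (X := X)) q_obj q_hom) _.
exact: (feq_sym (feq_idl q)).
Qed.

Lemma Phi_inj : injective Phi.
Proof. exact: corestr_inj (feq_id_inj Phi_left_inverse). Qed.

Lemma Phi_faithful : faithful Phi.
Proof. exact: feq_id_faithful Phi_left_inverse. Qed.

Lemma Phi_full : full Phi.
Proof.
move=> a b; have [c <-] := coeq_surj coeq a; have [d <-] := coeq_surj coeq b => g.
have [m Pm] := Psi_full (hcast (feq_obj hPhi c) (feq_obj hPhi d) g).
exists (fhom q m); apply: heq_eq; apply: heq_trans (feq_hom hPhi m) _.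
by have := heq_hcast (feq_obj hPhi c) (feq_obj hPhi d) g; rewrite -Pm.
Qed.

Lemma Phi_image (y : PX X) : (exists a, Phi a = y) <-> disjoint_supports y.
Proof.
rewrite -Psi_image //; split=> [[a <-] | [c <-]]; first exact: Phi_in_image.
by exists (q c); apply: (feq_obj hPhi).
Qed.

End Main.

Theorem mainTheorem15 (n : nat) (X : 'I_n -> EMCat)
  (tameX : forall i, tame (X i))
  (Q : Category) (q : Functor (Cod X) Q)
  (coeq : is_coequalizer (Lfun X) (Rfun X) q)
  (Phi : Functor Q (PX X))
  (hPhi : feq (fcomp Phi q) (Psi X)) :
  injective (fobj Phi) /\
  (forall a b : Q, bijective (@fhom _ _ Phi a b)) /\
  (forall y : PX X, (exists a : Q, Phi a = y) <-> disjoint_supports y).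
Proof.
split=> [a b | ]; first exact: (Phi_inj tameX coeq hPhi).
split=> [a b | y]; last exact: (Phi_image tameX coeq hPhi y).
apply: inj_surj_bij => [g g' | g]; first exact: (Phi_faithful tameX coeq hPhi).
exact: (Phi_full coeq hPhi).
Qed.
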